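(* Let $A\in\mathbb{R}^{n\times n}$ be nonsingular with $A^{-1}\geq 0$. Let $A=P_{1}-R_{1}+S_{1}$ be a regular double splitting and $A=P_{2}-R_{2}+S_{2}$ be a weak regular double splitting of $A$. Define $$W_{1}=\begin{pmatrix} P_{1}^{-1}R_{1} & -P_{1}^{-1}S_{1}\\ I & 0\end{pmatrix},\qquad W_{2}=\begin{pmatrix} P_{2}^{-1}R_{2} & -P_{2}^{-1}S_{2}\\ I & 0\end{pmatrix},$$ where $I$ is the $n\times n$ identity matrix. If $P_{1}^{-1}\geq P_{2}^{-1}$ and $R_{1}\geq R_{2}$, then $\rho(W_{1})\leq \rho(W_{2})< 1$.
   Context: For real matrices, $B\geq 0$ means all entries of $B$ are nonnegative, and $B\geq C$ means $B-C\geq 0$. $\rho(\cdot)$ denotes the spectral radius. A double splitting of a square matrix $A$ is a decomposition $A=P-R+S$ with $P$ nonsingular. It is called regular if $P^{-1}\geq 0$, $R\geq 0$ and $-S\geq 0$; it is called weak regular if $P^{-1}\geq 0$, $P^{-1}R\geq 0$ and $-P^{-1}S\geq 0$. *)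

From HB Require Import structures.
From mathcomp Require Import all_boot all_order all_algebra.
From mathcomp Require Import complex.
From mathcomp Require Import classical_sets reals.
Set Implicit Arguments. Unset Strict Implicit. Unset Printing Implicit Defensive.
Import Order.TTheory GRing.Theory Num.Theory.
Local Open Scope ring_scope.

Definition nonneg_mx (R : realType) (m n : nat) (B : 'M[R]_(m, n)) : Prop :=
  forall i j, 0 <= B i j.

Definition ge_mx (R : realType) (m n : nat) (B C : 'M[R]_(m, n)) : Prop :=
  nonneg_mx (B - C).

Definition complex_eigenvalue (R : realType) (n : nat) (A : 'M[R]_n) (z : R[i]) : bool :=
  eigenvalue (map_mx (fun x : R => (x%:C)%C) A) z.

Definition spectral_radius (R : realType) (n : nat) (A : 'M[R]_n) : R :=
  sup [set complex.Re `|z| | z in [set z : R[i] | complex_eigenvalue A z]]%classic.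

Definition double_splitting (R : realType) (n : nat) (A P Rm S : 'M[R]_n) : Prop :=
  A = P - Rm + S /\ P \in unitmx.

Definition regular_double_splitting (R : realType) (n : nat) (A P Rm S : 'M[R]_n) : Prop :=
  double_splitting A P Rm S /\ nonneg_mx (invmx P) /\ nonneg_mx Rm /\ nonneg_mx (- S).

Definition weak_regular_double_splitting (R : realType) (n : nat) (A P Rm S : 'M[R]_n) : Prop :=
  double_splitting A P Rm S /\ nonneg_mx (invmx P) /\
  nonneg_mx (invmx P *m Rm) /\ nonneg_mx (- (invmx P *m S)).

Definition iter_mx (R : realType) (n : nat) (P Rm S : 'M[R]_n) : 'M[R]_(n + n) :=
  block_mx (invmx P *m Rm) (- (invmx P *m S)) 1%:M 0.

(* Perron-Frobenius theory for a nonnegative matrix M is derived from its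
   resolvent: if sI - M is invertible for every s >= t, then (tI - M)^-1 >= 0,
   since the set of such t is closed (the adjugate is polynomial in s) and open
   (the positive vector v = (sI - M)^-1 1 satisfies M v < s' v for s' near s).
   This gives a nonnegative eigenvector for rho(M), the Collatz-Wielandt bounds
   (M v <= b v with v > 0 implies rho(M) <= b, and M x >= t x with 0 <= x <> 0
   implies rho(M) >= t), and rho(M) < 1 as soon as M v < v for some v > 0.

   Both iteration matrices are nonnegative. With X = P^-1, W (r y; y) = r (r y; y)
   means X (r R - S) y = r^2 y, and X (r R - S) = I - X A - (1 - r) X R.  For the
   Perron vector of W1, with 0 < r = rho(W1) < 1, regularity of the first splitting
   forces A y >= 0, so that P1^-1 >= P2^-1 and R1 >= R2 give
   X2 (r R2 - S2) y >= r^2 y, i.e. W2 (r y; y) >= r (r y; y), whence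
   rho(W2) >= r.  Finally W2 v < v for v = (u; u + d 1), where u = A^-1 1 and
   d > 0 is small. *)

From mathcomp Require Import all_boot all_order all_algebra.
From mathcomp Require Import complex polyrcf polyorder.
From mathcomp Require Import boolp classical_sets reals ring lra.
Import Order.TTheory GRing.Theory Num.Theory.
Local Open Scope ring_scope.
Set Implicit Arguments. Unset Strict Implicit. Unset Printing Implicit Defensive.

Section ComplexModulus.
Variable R : realType.
Implicit Types (x : R) (z w : R[i]).

Definition cmod z : R := complex.Re `|z|.

Definition abs_cV n (z : 'cV[R[i]]_n) : 'cV[R]_n := \col_i cmod (z i 0).

Lemma normc_cmod z : `|z| = (cmod z)%:C%C.
Proof. by rewrite /cmod normc_def. Qed.

Lemma cmod_ge0 z : 0 <= cmod z.
Proof. by rewrite -lecR -normc_cmod normr_ge0. Qed.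

Lemma cmodM z w : cmod (z * w) = cmod z * cmod w.
Proof. by apply: (@complexI R); rewrite rmorphM /= -!normc_cmod normrM. Qed.

Lemma cmod_real x : cmod x%:C%C = `|x|.
Proof. by rewrite /cmod normc_def /= expr0n /= addr0 sqrtr_sqr. Qed.

Lemma cmod_eq0 z : (cmod z == 0) = (z == 0).
Proof.
apply/eqP/eqP => [z0|->]; last by rewrite /cmod normr0.
by apply/normr0_eq0; rewrite normc_cmod z0.
Qed.

Lemma cmod_sum (I : finType) (F : I -> R[i]) :
  cmod (\sum_i F i) <= \sum_i cmod (F i).
Proof.
rewrite -lecR rmorph_sum -normc_cmod; apply: le_trans (ler_norm_sum _ _ _) _.
by apply: ler_sum => i _; rewrite normc_cmod.
Qed.

Lemma abs_cV_ge0 n (z : 'cV[R[i]]_n) : nonneg_mx (abs_cV z).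
Proof. by move=> i j; rewrite mxE cmod_ge0. Qed.

Lemma abs_cV_eq0 n (z : 'cV[R[i]]_n) : (abs_cV z == 0) = (z == 0).
Proof.
apply/eqP/eqP => [/matrixP z0|->]; apply/matrixP => i j; rewrite !mxE.
  by apply/eqP; rewrite -cmod_eq0 (ord1 j); have := z0 i 0; rewrite !mxE => ->.
by rewrite /cmod normr0.
Qed.

End ComplexModulus.

Section MatrixOrder.
Variable R : realType.

Lemma ge_mxP m n (B C : 'M[R]_(m, n)) : ge_mx B C <-> forall i j, C i j <= B i j.
Proof.
by split=> h i j; [have := h i j | ]; rewrite ?mxE subr_ge0.
Qed.

Lemma nonneg_mx0 m n : nonneg_mx (0 : 'M[R]_(m, n)).
Proof. by move=> i j; rewrite mxE. Qed.

Lemma nonneg_mx1 n : nonneg_mx (1%:M : 'M[R]_n).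
Proof. by move=> i j; rewrite mxE ler0n. Qed.

Lemma nonneg_mxD m n (B C : 'M[R]_(m, n)) :
  nonneg_mx B -> nonneg_mx C -> nonneg_mx (B + C).
Proof. by move=> B0 C0 i j; rewrite mxE addr_ge0. Qed.

Lemma nonneg_mxZ m n a (B : 'M[R]_(m, n)) : 0 <= a -> nonneg_mx B -> nonneg_mx (a *: B).
Proof. by move=> a0 B0 i j; rewrite mxE mulr_ge0. Qed.

Lemma nonneg_mxM m n p (B : 'M[R]_(m, n)) (C : 'M[R]_(n, p)) :
  nonneg_mx B -> nonneg_mx C -> nonneg_mx (B *m C).
Proof. by move=> B0 C0 i j; rewrite mxE sumr_ge0 // => k _; rewrite mulr_ge0. Qed.

Lemma nonneg_col_mx m1 m2 n (B1 : 'M[R]_(m1, n)) (B2 : 'M[R]_(m2, n)) :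
  nonneg_mx B1 -> nonneg_mx B2 -> nonneg_mx (col_mx B1 B2).
Proof. by move=> B10 B20 i j; rewrite mxE; case: splitP. Qed.

Lemma nonneg_block_mx m1 m2 n1 n2 (B11 : 'M[R]_(m1, n1)) (B12 : 'M[R]_(m1, n2))
    (B21 : 'M[R]_(m2, n1)) (B22 : 'M[R]_(m2, n2)) :
  nonneg_mx B11 -> nonneg_mx B12 -> nonneg_mx B21 -> nonneg_mx B22 ->
  nonneg_mx (block_mx B11 B12 B21 B22).
Proof.
by move=> *; rewrite /block_mx; apply: nonneg_col_mx => i j; rewrite mxE; case: splitP.
Qed.

Lemma ge_mx_mull m n p (M : 'M[R]_(m, n)) (B C : 'M[R]_(n, p)) :
  nonneg_mx M -> ge_mx B C -> ge_mx (M *m B) (M *m C).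
Proof. by move=> M0 BC; rewrite /ge_mx -mulmxBr; apply: nonneg_mxM. Qed.

Lemma exists_max_ratio n (i0 : 'I_n) (u v : 'cV[R]_n) : (forall i, 0 < v i 0) ->
  exists i t, u i 0 = t * v i 0 /\ ge_mx (t *: v) u.
Proof.
move=> v_gt0.
have [i _ imax] := @arg_maxP _ R _ i0 xpredT (fun k => u k 0 / v k 0) isT.
exists i, (u i 0 / v i 0); split; first by rewrite divfK // gt_eqF.
apply/ge_mxP => k j; rewrite ord1 mxE -ler_pdivrMr //; exact: imax.
Qed.

Lemma unitmx_nonneg_row_sum_gt0 n (X : 'M[R]_n) :
  X \in unitmx -> nonneg_mx X -> forall i, 0 < (X *m (const_mx 1 : 'cV[R]_n)) i 0.
Proof.
move=> Xu X0 i; rewrite mxE lt_def sumr_ge0 ?andbT => [|j _]; last first.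
  by rewrite mxE mulr1 X0.
apply/negP => /eqP rowi0.
have Xi0 j : X i j = 0.
  apply/eqP; rewrite eq_le X0 andbT -rowi0 (bigD1 j) //= mxE mulr1 lerDl.
  by rewrite sumr_ge0 // => k _; rewrite mxE mulr1 X0.
move/matrixP/(_ i i): (mulmxV Xu); rewrite !mxE eqxx big1 => [|j _]; last first.
  by rewrite Xi0 mul0r.
by move/eqP; rewrite eq_sym oner_eq0.
Qed.

End MatrixOrder.

Section CharPolyMx.
Variables (F : comNzRingType) (n : nat) (M : 'M[F]_n).

Lemma char_poly_mx_horner s : map_mx (horner_eval s) (char_poly_mx M) = s%:M - M.
Proof.
apply/matrixP => i j; rewrite !mxE.
by rewrite rmorphB rmorphMn /= /horner_eval hornerX hornerC.
Qed.

Lemma adj_char_poly_mx_horner s i j :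
  (\adj (char_poly_mx M) i j).[s] = \adj (s%:M - M) i j.
Proof.
have := map_mx_adj (horner_eval s) (char_poly_mx M).
by rewrite char_poly_mx_horner => <-; rewrite [RHS]mxE.
Qed.

Lemma horner_char_poly s : (char_poly M).[s] = \det (s%:M - M).
Proof. by rewrite -char_poly_mx_horner det_map_mx. Qed.

End CharPolyMx.

Section SingularMatrix.
Variables (F : fieldType) (n : nat).
Implicit Types (A M : 'M[F]_n) (s : F).

Lemma unitmx_char_poly M s : (s%:M - M \in unitmx) = ~~ root (char_poly M) s.
Proof. by rewrite unitmxE unitfE rootE horner_char_poly. Qed.

Lemma singular_mx_kernel A :
  A \notin unitmx -> exists2 v : 'cV_n, v != 0 & A *m v = 0.
Proof.
rewrite unitmxE unitfE negbK -det_tr => /det0P [v v_neq0 vA0].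
exists v^T; first by rewrite trmx_eq0.
by rewrite -[A]trmxK -trmx_mul vA0 trmx0.
Qed.

Lemma unitmx_of_kernel0 A : (forall v : 'cV_n, A *m v = 0 -> v = 0) -> A \in unitmx.
Proof.
move=> ker0; apply/negPn/negP => /singular_mx_kernel [v v_neq0 /ker0 v0].
by rewrite v0 eqxx in v_neq0.
Qed.

Lemma mulmx_eigen_shift M a (v : 'cV_n) : (a%:M - M) *m v = 0 -> M *m v = a *: v.
Proof. by move/eqP; rewrite mulmxBl mul_scalar_mx subr_eq0 => /eqP <-. Qed.

Lemma eigenvalue_cV M a : eigenvalue M a -> exists2 v : 'cV_n, v != 0 & M *m v = a *: v.
Proof.
rewrite eigenvalue_root_char -[root _ _]negbK -unitmx_char_poly.
by move=> /singular_mx_kernel [v v_neq0 /mulmx_eigen_shift]; exists v.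
Qed.

Lemma mulmx_scalar_singular A (B : 'M[F]_n) c : A \notin unitmx -> A *m B = c%:M -> c = 0.
Proof.
move=> Asing AB; apply/eqP; apply: contraNT Asing => c_neq0.
have /mulmx1_unit [] // : A *m (c^-1 *: B) = 1%:M.
by rewrite -scalemxAr AB scale_scalar_mx mulVf.
Qed.

Lemma adj_unitmx A : A \in unitmx -> \adj A = \det A *: invmx A.
Proof.
move=> Au; rewrite /invmx Au scalerA mulfV ?scale1r //.
by move: Au; rewrite unitmxE unitfE.
Qed.

End SingularMatrix.

Lemma complex_eigenvalue_real (R : realType) n (M : 'M[R]_n) (s : R) :
  root (char_poly M) s -> complex_eigenvalue M s%:C%C.
Proof.
rewrite /complex_eigenvalue eigenvalue_root_char.
have -> : map_mx (fun x : R => x%:C%C) M = map_mx (real_complex R) M by [].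
by rewrite -map_char_poly !rootE horner_map /= => /eqP ->.
Qed.

Section CollatzWielandt.
Variables (R : realType) (n : nat) (M : 'M[R]_n).
Hypothesis M0 : nonneg_mx M.

Lemma abs_cV_eigen (z : 'cV[R[i]]_n) a :
  map_mx (fun x : R => x%:C%C) M *m z = a *: z ->
  ge_mx (M *m abs_cV z) (cmod a *: abs_cV z).
Proof.
move=> hz; apply/ge_mxP => i j; rewrite ord1 !mxE -cmodM.
have -> : a * z i 0 = (a *: z) i 0 by rewrite mxE.
rewrite -hz mxE; apply: le_trans (cmod_sum _) _.
by apply: ler_sum => k _; rewrite !mxE cmodM cmod_real ger0_norm.
Qed.

Lemma eigen_le_of_mulmx_le (v : 'cV_n) b a :
  (forall i, 0 < v i 0) -> ge_mx (b *: v) (M *m v) ->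
  complex_eigenvalue M a -> cmod a <= b.
Proof.
(* Compare cmod a |z| <= M |z| with the least multiple t v of v above |z|. *)
move=> v_gt0 /ge_mxP Mv_le /eigenvalue_cV [z /matrix0Pn [i0 [j0 zi0]] hz].
set u := abs_cV z; have [i [t [ui u_le]]] := exists_max_ratio i0 u v_gt0.
have ui0_gt0 : 0 < u i0 0 by rewrite mxE lt_def cmod_eq0 -(ord1 j0) zi0 cmod_ge0.
have t_gt0 : 0 < t.
  have /ge_mxP/(_ i0 0) := u_le; rewrite [X in _ <= X]mxE => ut.
  by have := lt_le_trans ui0_gt0 ut; rewrite pmulr_lgt0.
have ui_gt0 : 0 < u i 0 by rewrite ui mulr_gt0.
rewrite -(ler_pM2r ui_gt0); apply: le_trans (_ : (M *m (t *: v)) i 0 <= _).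
  apply: le_trans (_ : (M *m u) i 0 <= _).
    by move/ge_mxP: (abs_cV_eigen hz) => /(_ i 0); rewrite mxE.
  by move/ge_mxP: (ge_mx_mull M0 u_le) => /(_ i 0).
rewrite -scalemxAr mxE ui mulrCA; apply: ler_wpM2l; first exact: ltW.
by have := Mv_le i 0; rewrite [X in _ <= X]mxE.
Qed.

Lemma row_sum_le_mx_sum i : (M *m (const_mx 1 : 'cV_n)) i 0 <= \sum_k \sum_l M k l.
Proof.
rewrite mxE; under eq_bigr do rewrite mxE mulr1.
rewrite [X in _ <= X](bigD1 i) //= lerDl sumr_ge0 // => k _.
by apply: sumr_ge0 => l _; apply: M0.
Qed.

Lemma eigen_bounded : exists b, forall a, complex_eigenvalue M a -> cmod a <= b.
Proof.
exists (\sum_i \sum_j M i j) => a; apply: (@eigen_le_of_mulmx_le (const_mx 1)).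
  by move=> i; rewrite mxE ltr01.
apply/ge_mxP => i j; rewrite (ord1 j) [X in _ <= X]mxE [const_mx _ _ _]mxE mulr1.
exact: row_sum_le_mx_sum.
Qed.

End CollatzWielandt.

Section RealPoly.
Variable R : rcfType.
Implicit Types (p q : {poly R}) (c s : R).

Lemma monic_horner_gt0 p s : p \is monic -> (forall y, s <= y -> ~~ root p y) -> 0 < p.[s].
Proof.
move=> p_monic noroot.
have noroot' : {in `[s, +oo[, forall y, ~~ root p y}.
  by move=> y; rewrite in_itv /= andbT; apply: noroot.
have := sgp_pinftyP noroot'; rewrite /sgp_pinfty (monicP p_monic) sgr1 => /(_ s).
by rewrite in_itv /= lexx => /(_ isT)/eqP; rewrite sgr_cp0.
Qed.

Lemma horner_ge0_from_right q c : (forall s, c < s -> 0 <= q.[s]) -> 0 <= q.[c].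
Proof.
move=> right_ge0; rewrite leNgt; apply/negP => qc_lt0.
have q_neq0 : q != 0 by apply: contraTneq qc_lt0 => ->; rewrite horner0 ltxx.
have [y hy] := @neighpr_wit R q c (c + 1) (ltr_pwDr ltr01 (lexx c)) q_neq0.
have := sgr_neighprN (ltr0_neq0 qc_lt0) hy; rewrite (ltr0_sg qc_lt0) => /eqP.
rewrite sgr_cp0 ltNge right_ge0 //.
by move: hy; rewrite /neighpr in_itv /= => /andP [].
Qed.

End RealPoly.

Section SpectralRadius.
Variables (R : realType) (n : nat) (M : 'M[R]_n).

(* [sup set0 = 0]: a matrix without complex eigenvalues (i.e. [n = 0]) has
   spectral radius 0. *)
Lemma spectral_radius_eq0 : ~ (exists a, complex_eigenvalue M a) -> spectral_radius M = 0.
Proof.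
move=> none; rewrite /spectral_radius -[RHS]sup0; congr sup.
by apply/seteqP; split => x // [z hz _]; apply: none; exists z.
Qed.

Lemma spectral_radius_le b : 0 <= b ->
  (forall a, complex_eigenvalue M a -> cmod a <= b) -> spectral_radius M <= b.
Proof.
move=> b0 hb; have [[a ha]|none] := pselect (exists a, complex_eigenvalue M a).
  by apply: ge_sup; [exists (cmod a), a | move=> x [z hz <-]; exact: hb].
by rewrite spectral_radius_eq0.
Qed.

Hypothesis M0 : nonneg_mx M.

Lemma cmod_le_spectral_radius a : complex_eigenvalue M a -> cmod a <= spectral_radius M.
Proof.
move=> ha; have [b hb] := eigen_bounded M0.
apply: sup_upper_bound; last by exists a.
by split; [exists (cmod a), a | exists b => x [z hz <-]; apply: hb].
Qed.

Lemma spectral_radius_ge0 : 0 <= spectral_radius M.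
Proof.
have [[a ha]|none] := pselect (exists a, complex_eigenvalue M a).
  exact: le_trans (cmod_ge0 a) (cmod_le_spectral_radius ha).
by rewrite spectral_radius_eq0.
Qed.

Lemma spectral_radius_lt_of_mulmx_lt (v : 'cV_n) t : 0 < t -> (forall i, 0 < v i 0) ->
  (forall i, (M *m v) i 0 < t * v i 0) -> spectral_radius M < t.
Proof.
move=> t_gt0 v_gt0 Mv_lt; set b := \big[Num.max/0]_i ((M *m v) i 0 / v i 0).
apply: (@le_lt_trans _ _ b).
  apply: spectral_radius_le => [|a]; first exact: bigmax_ge_id.
  apply: (eigen_le_of_mulmx_le M0 v_gt0); apply/ge_mxP => i j.
  rewrite (ord1 j) [X in _ <= X]mxE -ler_pdivrMr; last exact: v_gt0.
  exact: (le_bigmax 0 (fun i => (M *m v) i 0 / v i 0) i).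
by apply: bigmax_lt => // i _; rewrite ltr_pdivrMr ?v_gt0 // mulrC.
Qed.

End SpectralRadius.

Section Resolvent.
Variables (R : realType) (n : nat) (M : 'M[R]_n).

Definition nonneg_resolvent (s : R) : Prop :=
  s%:M - M \in unitmx /\ nonneg_mx (invmx (s%:M - M)).

Lemma shift_mulmxE s (y : 'cV_n) : (s%:M - M) *m y = s *: y - M *m y.
Proof. by rewrite mulmxBl mul_scalar_mx. Qed.

Lemma eq0_of_nonneg_resolvent t (x : 'cV_n) :
  nonneg_resolvent t -> nonneg_mx x -> ge_mx (M *m x) (t *: x) -> x = 0.
Proof.
move=> [Qu Q0] x0 x_sub.
have nx0 : nonneg_mx (- x).
  by rewrite -(mulKmx Qu (- x)); apply: nonneg_mxM => //; rewrite mulmxN shift_mulmxE opprB.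
apply/matrixP => i j; apply/eqP; rewrite mxE eq_le x0 andbT.
by have := nx0 i j; rewrite mxE oppr_ge0.
Qed.

Lemma det_shift_gt0 s :
  (forall s', s <= s' -> s'%:M - M \in unitmx) -> 0 < \det (s%:M - M).
Proof.
move=> unit_above; rewrite -horner_char_poly.
apply: monic_horner_gt0 (char_poly_monic M) _ => y sy.
by rewrite -unitmx_char_poly unit_above.
Qed.

Lemma adj_shift_ge0 s :
  (forall s', s <= s' -> nonneg_resolvent s') -> nonneg_mx (\adj (s%:M - M)).
Proof.
move=> res_above; have [Qu Q0] := res_above s (lexx s).
rewrite adj_unitmx //; apply: nonneg_mxZ Q0; apply: ltW; apply: det_shift_gt0.
by move=> s' /res_above [].
Qed.

Lemma nonneg_resolvent_closed c : c%:M - M \in unitmx ->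
  (forall s, c < s -> nonneg_resolvent s) -> nonneg_resolvent c.
Proof.
move=> Qu res_right; split=> // i j.
have adj_right s : c < s -> 0 <= (\adj (char_poly_mx M) i j).[s].
  move=> cs; rewrite adj_char_poly_mx_horner; apply: adj_shift_ge0 => s' /(lt_le_trans cs).
  exact: res_right.
have det_right s : c < s -> 0 <= (char_poly M).[s].
  move=> cs; rewrite horner_char_poly ltW //; apply: det_shift_gt0 => s' /(lt_le_trans cs).
  by move/res_right => [].
have := horner_ge0_from_right adj_right; have := horner_ge0_from_right det_right.
rewrite adj_char_poly_mx_horner horner_char_poly le_eqVlt => /predU1P [det0|det_gt0].
  by move: Qu; rewrite unitmxE unitfE -det0 eqxx.
by rewrite adj_unitmx // mxE pmulr_rge0.
Qed.

Hypothesis M0 : nonneg_mx M.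

Lemma nonneg_of_shift_mulmx (v y : 'cV_n) t :
  (forall i, 0 < v i 0) -> (forall i, (M *m v) i 0 < t * v i 0) ->
  nonneg_mx ((t%:M - M) *m y) -> nonneg_mx y.
Proof.
move=> v_gt0 Mv_lt Qy_ge0 i j; rewrite (ord1 j).
have [k [tau [yk y_ge]]] := exists_max_ratio i (- y) v_gt0.
have [tau_le0|tau_gt0] := lerP tau 0.
  have /ge_mxP/(_ i 0) := y_ge; rewrite !mxE => yi; have := v_gt0 i; nra.
have y_ge' : ge_mx y (- tau *: v).
  by apply/ge_mxP => a b; have /ge_mxP/(_ a b) := y_ge; rewrite !mxE; lra.
exfalso; move: Qy_ge0; rewrite shift_mulmxE => /ge_mxP/(_ k 0).
rewrite [X in _ <= X]mxE leNgt => /negP; apply.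
apply: lt_le_trans (_ : (M *m (- tau *: v)) k 0 <= _); last first.
  by have /ge_mxP := ge_mx_mull M0 y_ge'; apply.
rewrite -scalemxAr mxE; have := Mv_lt k; move: yk; rewrite mxE; nra.
Qed.

Lemma nonneg_resolvent_of_mulmx_lt (v : 'cV_n) t :
  (forall i, 0 < v i 0) -> (forall i, (M *m v) i 0 < t * v i 0) -> nonneg_resolvent t.
Proof.
move=> v_gt0 Mv_lt; have mono := nonneg_of_shift_mulmx v_gt0 Mv_lt.
have Qu : t%:M - M \in unitmx.
  apply: unitmx_of_kernel0 => y Qy0.
  have ny0 : nonneg_mx (- y) by apply: mono; rewrite mulmxN Qy0 oppr0; exact: nonneg_mx0.
  have y0 : nonneg_mx y by apply: mono; rewrite Qy0; exact: nonneg_mx0.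
  apply/matrixP => i j; apply/eqP; rewrite mxE eq_le y0 andbT -oppr_ge0.
  by have := ny0 i j; rewrite mxE.
split=> // i j; have := mono (col j (invmx (t%:M - M))) _ i 0; rewrite mxE; apply.
by rewrite colE mulmxA mulmxV // mul1mx => k l; rewrite mxE ler0n.
Qed.

Lemma nonneg_resolvent_large s : 1 + \sum_i \sum_j M i j <= s -> nonneg_resolvent s.
Proof.
move=> s_ge; apply: (@nonneg_resolvent_of_mulmx_lt (const_mx 1)) => i.
  by rewrite mxE ltr01.
rewrite [const_mx _ _ _]mxE mulr1; apply: le_lt_trans (row_sum_le_mx_sum M0 i) _.
by apply: lt_le_trans s_ge; rewrite ltrDr ltr01.
Qed.

Lemma eigen_lt_of_nonneg_resolvent t a :
  nonneg_resolvent t -> complex_eigenvalue M a -> cmod a < t.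
Proof.
move=> res_t /eigenvalue_cV [z z_neq0 hz]; rewrite ltNge; apply/negP => ta.
move: z_neq0; rewrite -abs_cV_eq0 (eq0_of_nonneg_resolvent res_t (abs_cV_ge0 z)) ?eqxx //.
apply/ge_mxP => i j; apply: le_trans (_ : cmod a * abs_cV z i j <= _).
  by rewrite mxE ler_wpM2r // abs_cV_ge0.
by have /ge_mxP := abs_cV_eigen M0 hz; move/(_ i j); rewrite [X in X <= _]mxE.
Qed.

Lemma nonneg_resolvent_open c : nonneg_resolvent c ->
  exists2 e : R, 0 < e & forall s, c - e <= s -> nonneg_resolvent s.
Proof.
(* M v = c v - 1, hence M v < s v as soon as (c - s) v < 1. *)
move=> [Qu Q0]; set v := invmx (c%:M - M) *m (const_mx 1 : 'cV[R]_n).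
have v_gt0 i : 0 < v i 0 by apply: unitmx_nonneg_row_sum_gt0; rewrite ?unitmx_inv.
set V := \sum_i v i 0.
have v_le i : v i 0 <= V.
  by rewrite /V (bigD1 i) //= lerDl sumr_ge0 // => j _; apply: ltW.
have V_ge0 : 0 <= V by apply: sumr_ge0 => i _; apply: ltW.
have Mv i : (M *m v) i 0 = c * v i 0 - 1.
  have Qv : (c%:M - M) *m v = const_mx 1 by rewrite mulmxA mulmxV ?mul1mx.
  move/matrixP/(_ i 0): Qv; rewrite shift_mulmxE [LHS]mxE [(c *: v) i 0]mxE.
  rewrite [const_mx 1 i 0]mxE [(- (M *m v)) i 0]mxE; lra.
exists (1 + V)^-1 => [|s cs]; first by rewrite invr_gt0 ltr_pwDl.
apply: (nonneg_resolvent_of_mulmx_lt v_gt0) => i; rewrite Mv.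
have h1 : (c - s) * v i 0 <= (1 + V)^-1 * v i 0.
  by apply: ler_wpM2r; [exact: ltW | lra].
have h2 : (1 + V)^-1 * v i 0 <= (1 + V)^-1 * V.
  by apply: ler_wpM2l; [rewrite invr_ge0; lra | exact: v_le].
have h3 : (1 + V)^-1 * V < 1 by rewrite mulrC ltr_pdivrMr ?mul1r; lra.
lra.
Qed.

Lemma nonneg_resolvent_of_unitmx_above t :
  (forall s, t <= s -> s%:M - M \in unitmx) -> nonneg_resolvent t.
Proof.
(* The supremum c of the bad points above t is good by closedness, and so is
   a neighbourhood of c by openness. *)
move=> unit_above; apply: contrapT => res_t.
pose bad := [set s | t <= s /\ ~ nonneg_resolvent s]%classic.
set S := 1 + \sum_i \sum_j M i j.
have bad_le s : bad s -> s <= S.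
  by move=> [_ res_s]; rewrite leNgt; apply/negP => /ltW /nonneg_resolvent_large.
have bad_sup : has_sup bad by split; [exists t; split | exists S].
set c := sup bad.
have tc : t <= c by apply: sup_upper_bound => //; split.
have res_right s : c < s -> nonneg_resolvent s.
  move=> cs; apply: contrapT => res_s.
  have /(sup_upper_bound bad_sup) : bad s by split => //; exact: le_trans (ltW cs).
  by rewrite leNgt cs.
have [e e_gt0 res_near] :=
  nonneg_resolvent_open (nonneg_resolvent_closed (unit_above c tc) res_right).
have [b [_ res_b] cb] := sup_adherent e_gt0 bad_sup.
by apply: res_b; apply: res_near; exact: ltW.
Qed.

End Resolvent.

Lemma scalemx_eq_scalar_mx (F : idomainType) n (d p : F) (X : 'M[F]_n) i0 :
  d != 0 -> d *: X = p%:M -> X = (X i0 i0)%:M.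
Proof.
move=> d_neq0 dX; apply/matrixP => i j; apply: (mulfI d_neq0).
have dXE k l : d * X k l = p *+ (k == l) by move/matrixP/(_ k l): dX; rewrite !mxE.
by rewrite [in RHS]mxE mulrnAr !dXE eqxx mulr1n.
Qed.

Lemma poly_mx_root_factor (F : fieldType) m n (Q : 'M[{poly F}]_(m, n)) r : Q != 0 ->
  exists k (D : 'M[{poly F}]_(m, n)),
    Q = ('X - r%:P) ^+ k *: D /\ map_mx (horner_eval r) D != 0.
Proof.
move=> /matrix0Pn [i1 [j1 Q11]].
pose P k := [exists i, [exists j, (Q i j != 0) && (\mu_r (Q i j) == k)]].
have exP : exists k, P k.
  by exists (\mu_r (Q i1 j1)); apply/existsP; exists i1; apply/existsP; exists j1; rewrite Q11 eqxx.
case: (ex_minnP exP) => k /existsP [ia /existsP [ja /andP [Qa_neq0 /eqP mua]]] kmin.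
have mu_ge i j : Q i j != 0 -> (k <= \mu_r (Q i j))%N.
  by move=> Qij; apply: kmin; apply/existsP; exists i; apply/existsP; exists j; rewrite Qij eqxx.
set d := ('X - r%:P) ^+ k.
have d_neq0 : d != 0 by rewrite expf_neq0 // polyXsubC_eq0.
exists k, (\matrix_(i, j) (Q i j %/ d)); split.
  apply/matrixP => i j; rewrite !mxE -/d mulrC divpK //.
  have [->|Qij] := eqVneq (Q i j) 0; first exact: dvdp0.
  by rewrite root_le_mu ?mu_ge.
apply/matrix0Pn; exists ia, ja; rewrite !mxE /horner_eval.
have [q q_noroot ->] := mu_spec r Qa_neq0; rewrite mua mulpK // -rootE.
Qed.

Section Perron.
Variables (R : realType) (n : nat) (M : 'M[R]_n).
Hypothesis M0 : nonneg_mx M.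

Lemma nonneg_eigenvector_of_root r : root (char_poly M) r ->
  (forall s, r < s -> nonneg_resolvent M s) ->
  exists2 u : 'cV_n, nonneg_mx u /\ u != 0 & M *m u = r *: u.
Proof.
(* (X - r) ^+ k D = adj (X I - M), with D(r) <> 0; (rI - M) D(r) = 0, and
   D(r) >= 0 as a right limit of adj (sI - M) / (s - r) ^+ k >= 0. *)
move=> r_root res_right; set Q := \adj (char_poly_mx M).
have r_sing : r%:M - M \notin unitmx by rewrite unitmx_char_poly negbK.
have [_ /matrix0Pn [i0 _] _] := singular_mx_kernel r_sing.
have Q_neq0 : Q != 0.
  apply: contra_neq (monic_neq0 (char_poly_monic M)) => Q0.
  have /matrixP/(_ i0 i0) := mul_mx_adj (char_poly_mx M).
  by rewrite -/Q Q0 mulmx0 !mxE eqxx mulr1n.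
have [k [D [QD Dr_neq0]]] := poly_mx_root_factor r Q_neq0.
set d := ('X - r%:P) ^+ k in QD; set Dr := map_mx (horner_eval r) D in Dr_neq0.
have d_neq0 : d != 0 by rewrite expf_neq0 // polyXsubC_eq0.
have MD_scalar : char_poly_mx M *m D = ((char_poly_mx M *m D) i0 i0)%:M.
  by apply: (scalemx_eq_scalar_mx _ d_neq0); rewrite scalemxAr -QD mul_mx_adj.
have Dr_ker : (r%:M - M) *m Dr = 0.
  have := congr1 (map_mx (horner_eval r)) MD_scalar.
  rewrite map_mxM char_poly_mx_horner map_scalar_mx => MDr.
  by rewrite MDr (mulmx_scalar_singular r_sing MDr) -scalemx1 scale0r.
have Dr_ge0 : nonneg_mx Dr.
  move=> i j; rewrite mxE; apply: horner_ge0_from_right => s rs.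
  have : 0 <= (Q i j).[s].
    rewrite adj_char_poly_mx_horner; apply: adj_shift_ge0 => s' /(lt_le_trans rs).
    exact: res_right.
  by rewrite QD mxE hornerM horner_exp hornerXsubC pmulr_rge0 // exprn_gt0 // subr_gt0.
have /matrix0Pn [ia [ja Dra]] := Dr_neq0.
exists (col ja Dr); last by apply: mulmx_eigen_shift; rewrite colE mulmxA Dr_ker mul0mx.
split; first by move=> i j; rewrite mxE Dr_ge0.
by apply/matrix0Pn; exists ia, 0; rewrite mxE.
Qed.

Lemma unitmx_above_spectral_radius s : spectral_radius M < s -> s%:M - M \in unitmx.
Proof.
move=> rs; rewrite unitmx_char_poly; apply/negP.
move=> /complex_eigenvalue_real /(cmod_le_spectral_radius M0); rewrite cmod_real.
by move=> /(le_trans (ler_norm s)); rewrite leNgt rs.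
Qed.

Lemma nonneg_resolvent_above_spectral_radius s :
  spectral_radius M < s -> nonneg_resolvent M s.
Proof.
move=> rs; apply: (nonneg_resolvent_of_unitmx_above M0) => s' /(lt_le_trans rs).
exact: unitmx_above_spectral_radius.
Qed.

Lemma root_char_poly_spectral_radius :
  (exists a, complex_eigenvalue M a) -> root (char_poly M) (spectral_radius M).
Proof.
move=> [a ha]; set r := spectral_radius M; apply/negPn/negP => r_noroot.
have r_unit : r%:M - M \in unitmx by rewrite unitmx_char_poly.
have [e e_gt0 res_near] := nonneg_resolvent_open M0
  (nonneg_resolvent_closed r_unit nonneg_resolvent_above_spectral_radius).
have res_re := res_near (r - e) (lexx _).
suff : r <= r - e by lra.
apply: spectral_radius_le => [|b hb]; last exact/ltW/(eigen_lt_of_nonneg_resolvent M0 res_re).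
exact: le_trans (cmod_ge0 a) (ltW (eigen_lt_of_nonneg_resolvent M0 res_re ha)).
Qed.

Lemma perron_eigenvector : (exists a, complex_eigenvalue M a) ->
  exists2 u : 'cV_n, nonneg_mx u /\ u != 0 & M *m u = spectral_radius M *: u.
Proof.
move=> eig; apply: nonneg_eigenvector_of_root.
  exact: root_char_poly_spectral_radius.
exact: nonneg_resolvent_above_spectral_radius.
Qed.

Lemma spectral_radius_ge_of_mulmx_ge (x : 'cV_n) t :
  nonneg_mx x -> x != 0 -> ge_mx (M *m x) (t *: x) -> t <= spectral_radius M.
Proof.
move=> x0 x_neq0 x_sub.
have [[s ts s_root]|no_root] := pselect (exists2 s, t <= s & root (char_poly M) s).
  apply: le_trans ts (le_trans (ler_norm s) _); rewrite -cmod_real.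
  exact/(cmod_le_spectral_radius M0)/complex_eigenvalue_real.
have res_t : nonneg_resolvent M t.
  apply: (nonneg_resolvent_of_unitmx_above M0) => s ts; rewrite unitmx_char_poly.
  by apply/negP => s_root; apply: no_root; exists s.
by move: x_neq0; rewrite (eq0_of_nonneg_resolvent res_t x0 x_sub) eqxx.
Qed.

End Perron.

Lemma ord_add_ind m1 m2 (Pr : 'I_(m1 + m2) -> Prop) :
  (forall i, Pr (lshift m2 i)) -> (forall i, Pr (rshift m1 i)) -> forall i, Pr i.
Proof. by move=> Pl Pr' i; rewrite -(splitK i); case: (split i). Qed.

Lemma exists_pos_mul_lt (R : realFieldType) (I : finType) (w c : I -> R) :
  (forall i, 0 < w i) -> (forall i, 0 <= c i) -> exists2 d, 0 < d & forall i, d * c i < w i.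
Proof.
move=> w_gt0 c_ge0; set d := \big[Num.min/1]_i (w i / (1 + c i)).
have d_gt0 : 0 < d by apply: lt_bigmin => // i _; rewrite divr_gt0 // ltr_pwDl.
exists d => // i; have := bigmin_le 1 i (fun i => w i / (1 + c i)).
rewrite -/d ler_pdivlMr ?ltr_pwDl // mulrDr mulr1 => d_le.
by apply: lt_le_trans d_le; rewrite -subr_gt0 addrK.
Qed.

Section DoubleSplitting.
Variables (R : realType) (n : nat) (A P Rm S : 'M[R]_n).

Lemma regular_weak_regular_double_splitting :
  regular_double_splitting A P Rm S -> weak_regular_double_splitting A P Rm S.
Proof.
move=> [splitA [X0 [R0 nS0]]]; split=> //; split=> //.
by split; [exact: nonneg_mxM | rewrite -mulmxN; exact: nonneg_mxM].
Qed.

Lemma iter_mx_nonneg :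
  weak_regular_double_splitting A P Rm S -> nonneg_mx (iter_mx P Rm S).
Proof.
by move=> [_ [_ [B0 C0]]]; apply: nonneg_block_mx => //; [exact: nonneg_mx1 | exact: nonneg_mx0].
Qed.

Lemma iter_mx_mul_col (y z : 'cV_n) :
  iter_mx P Rm S *m col_mx y z = col_mx (invmx P *m (Rm *m y - S *m z)) y.
Proof. by rewrite mul_block_col mul1mx mul0mx addr0 mulmxBr !mulmxA mulNmx. Qed.

Lemma iter_mx_mul_col_scale (y : 'cV_n) r :
  iter_mx P Rm S *m col_mx (r *: y) y = col_mx (invmx P *m (r *: Rm - S) *m y) (r *: y).
Proof. by rewrite iter_mx_mul_col -mulmxA mulmxBl -scalemxAr -scalemxAl. Qed.

Lemma double_splitting_pencil r : double_splitting A P Rm S ->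
  invmx P *m (r *: Rm - S) = 1%:M - invmx P *m A - (1 - r) *: (invmx P *m Rm).
Proof.
move=> [-> Pu]; rewrite !(mulmxDr, mulmxN) mulVmx // -scalemxAr.
move: (invmx P *m Rm) (invmx P *m S) => B C.
by apply/matrixP => i j; rewrite !mxE; ring.
Qed.

Lemma iter_mx_eigenvector (u : 'cV_(n + n)) r : iter_mx P Rm S *m u = r *: u ->
  exists y, u = col_mx (r *: y) y /\ invmx P *m (r *: Rm - S) *m y = r ^+ 2 *: y.
Proof.
rewrite -[u]vsubmxK iter_mx_mul_col scale_col_mx => /eq_col_mx [top bot].
exists (dsubmx u); split; first by rewrite -bot.
move: top; rewrite bot -mulmxA mulmxBl -scalemxAr -scalemxAl => ->.
by rewrite scalerA -expr2.
Qed.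

Lemma iter_mx_mulmx_ge (y : 'cV_n) r :
  ge_mx (invmx P *m (r *: Rm - S) *m y) (r ^+ 2 *: y) ->
  ge_mx (iter_mx P Rm S *m col_mx (r *: y) y) (r *: col_mx (r *: y) y).
Proof.
move=> pencil_ge; rewrite iter_mx_mul_col_scale scale_col_mx scalerA -expr2.
by rewrite /ge_mx opp_col_mx add_col_mx subrr; apply: nonneg_col_mx => //; exact: nonneg_mx0.
Qed.

Lemma regular_pencil_eigen_mulmx_nonneg (y : 'cV_n) r :
  regular_double_splitting A P Rm S -> 0 < r -> r <= 1 -> nonneg_mx y ->
  invmx P *m (r *: Rm - S) *m y = r ^+ 2 *: y -> nonneg_mx (A *m y).
Proof.
move=> [[A_eq Pu] [_ [R0 nS0]]] r_gt0 r_le1 y0; rewrite -mulmxA => eig.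
have Py : (r *: Rm - S) *m y = r ^+ 2 *: (P *m y).
  by rewrite -[LHS](mulKVmx Pu) eig scalemxAr.
have P_eq : P = A + Rm - S by rewrite A_eq [P - Rm + S + Rm]addrAC subrK addrK.
move: Py; rewrite P_eq mulmxBl -scalemxAl !mulmxDl mulNmx.
have := nonneg_mxM R0 y0; have := nonneg_mxM nS0 y0; rewrite mulNmx.
move: (A *m y) (Rm *m y) (S *m y) => a b c nc0 b0 /matrixP eq i j.
have := eq i j; have := b0 i j; have := nc0 i j; rewrite !mxE => nc bij eqij.
have r2_gt0 : 0 < r ^+ 2 by exact: exprn_gt0.
(* This is where R >= 0 and -S >= 0 are used. *)
have key : r ^+ 2 * a i j = r * (1 - r) * b i j + (1 - r ^+ 2) * - c i j.
  by rewrite expr2 in eqij *; lra.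
rewrite -(pmulr_rge0 _ r2_gt0) key; apply: addr_ge0; apply: mulr_ge0 => //.
  by rewrite mulr_ge0 ?subr_ge0 // ltW.
by rewrite subr_ge0 expr_le1 // ltW.
Qed.

Lemma iter_mx_exists_mulmx_lt :
  A \in unitmx -> nonneg_mx (invmx A) -> weak_regular_double_splitting A P Rm S ->
  exists2 v : 'cV_(n + n), (forall i, 0 < v i 0) &
    forall i, (iter_mx P Rm S *m v) i 0 < v i 0.
Proof.
move=> Au A0 [splitA [X0 [B0 C0]]]; set X := invmx P in X0 B0 C0 *.
set e := (const_mx 1 : 'cV[R]_n).
have e0 : nonneg_mx e by move=> i j; rewrite mxE ler01.
set u := invmx A *m e; set w := X *m e; set c := - (X *m S) *m e.
have w_gt0 i : 0 < w i 0.
  by apply: unitmx_nonneg_row_sum_gt0 => //; rewrite unitmx_inv; case: splitA.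
have c0 : nonneg_mx c by apply: nonneg_mxM.
have XRSu : X *m (Rm - S) *m u = u - w.
  have := double_splitting_pencil 1 splitA; rewrite scale1r subrr scale0r subr0 => ->.
  by rewrite mulmxBl mul1mx -mulmxA mulKVmx.
have u_gt0 i : 0 < u i 0.
  apply: lt_le_trans (w_gt0 i) _; rewrite -subr_ge0.
  have : nonneg_mx (X *m (Rm - S) *m u).
    apply: nonneg_mxM; last exact: nonneg_mxM.
    by rewrite mulmxBr; apply: nonneg_mxD.
  by rewrite XRSu => /(_ i 0); rewrite mxE [(- w) i 0]mxE.
have Wtop d : X *m (Rm *m u - S *m (u + d *: e)) = u - w + d *: c.
  rewrite [S *m _]mulmxDr opprD addrA -mulmxBl mulmxDr mulmxA XRSu mulmxN -!scalemxAr.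
  by rewrite /c mulNmx -mulmxA scalerN.
have [d d_gt0 dc_lt] := exists_pos_mul_lt w_gt0 (fun i => c0 i 0).
clearbody u w c.
exists (col_mx u (u + d *: e)) => [|i].
  by apply: ord_add_ind => i; rewrite ?col_mxEu ?col_mxEd ?mxE; have := u_gt0 i; lra.
rewrite iter_mx_mul_col Wtop; move: i; apply: ord_add_ind => i.
  by rewrite !col_mxEu !mxE; have := dc_lt i; lra.
by rewrite !col_mxEd !mxE; lra.
Qed.

End DoubleSplitting.

Lemma double_splitting_pencil_comparison (R : realType) n (A P1 R1 S1 P2 R2 S2 : 'M[R]_n)
    (y : 'cV_n) r :
  double_splitting A P1 R1 S1 -> double_splitting A P2 R2 S2 ->
  nonneg_mx (invmx P2) -> nonneg_mx R1 -> ge_mx (invmx P1) (invmx P2) -> ge_mx R1 R2 ->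
  r <= 1 -> nonneg_mx y -> nonneg_mx (A *m y) ->
  ge_mx (invmx P2 *m (r *: R2 - S2) *m y) (invmx P1 *m (r *: R1 - S1) *m y).
Proof.
move=> split1 split2 X20 R10 X12 R12 r_le1 y0 Ay0.
rewrite /ge_mx -mulmxBl (double_splitting_pencil r split1) (double_splitting_pencil r split2).
set X1 := invmx P1 in X12 *; set X2 := invmx P2 in X20 X12 *.
have -> : 1%:M - X2 *m A - (1 - r) *: (X2 *m R2) - (1%:M - X1 *m A - (1 - r) *: (X1 *m R1))
    = (X1 - X2) *m A + (1 - r) *: ((X1 - X2) *m R1 + X2 *m (R1 - R2)).
  rewrite !(mulmxBl, mulmxBr).
  move: (X1 *m A) (X2 *m A) (X1 *m R1) (X2 *m R1) (X2 *m R2) => a1 a2 b1 b21 b2.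
  by apply/matrixP => i j; rewrite !mxE; ring.
rewrite mulmxDl -mulmxA -scalemxAl; apply: nonneg_mxD; first exact: nonneg_mxM.
apply: nonneg_mxZ; first by rewrite subr_ge0.
by apply: nonneg_mxM => //; apply: nonneg_mxD; apply: nonneg_mxM.
Qed.

Lemma iter_mx_spectral_radius_lt1 (R : realType) n (A P Rm S : 'M[R]_n) :
  A \in unitmx -> nonneg_mx (invmx A) -> weak_regular_double_splitting A P Rm S ->
  spectral_radius (iter_mx P Rm S) < 1.
Proof.
move=> Au A0 wreg; have [v v_gt0 Wv_lt] := iter_mx_exists_mulmx_lt Au A0 wreg.
apply: (spectral_radius_lt_of_mulmx_lt (iter_mx_nonneg wreg) ltr01 v_gt0) => i.
by rewrite mul1r.
Qed.

Unset Implicit Arguments.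
Set Strict Implicit.

Theorem corollary3p4 (R : realType) (n : nat) (A P1 R1 S1 P2 R2 S2 : 'M[R]_n) :
  A \in unitmx -> nonneg_mx (invmx A) ->
  regular_double_splitting A P1 R1 S1 ->
  weak_regular_double_splitting A P2 R2 S2 ->
  ge_mx (invmx P1) (invmx P2) -> ge_mx R1 R2 ->
  spectral_radius (iter_mx P1 R1 S1) <= spectral_radius (iter_mx P2 R2 S2) /\
  spectral_radius (iter_mx P2 R2 S2) < 1.
Proof.
move=> Au A0 reg1 wreg2 X12 R12.
have wreg1 := regular_weak_regular_double_splitting reg1.
have W1_ge0 := iter_mx_nonneg wreg1; have W2_ge0 := iter_mx_nonneg wreg2.
split; last exact: iter_mx_spectral_radius_lt1 Au A0 wreg2.
set r := spectral_radius (iter_mx P1 R1 S1).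
have [eig|none] := pselect (exists a, complex_eigenvalue (iter_mx P1 R1 S1) a); last first.
  by rewrite /r spectral_radius_eq0 //; exact: spectral_radius_ge0 W2_ge0.
have [r_le0|r_gt0] := lerP r 0; first exact: le_trans r_le0 (spectral_radius_ge0 W2_ge0).
have r_le1 : r <= 1 := ltW (iter_mx_spectral_radius_lt1 Au A0 wreg1).
have [u [u_ge0 u_neq0] Wu] := perron_eigenvector W1_ge0 eig.
have [y [uE pencil1]] := iter_mx_eigenvector Wu.
have y_ge0 : nonneg_mx y by move=> i j; have := u_ge0 (rshift n i) j; rewrite uE col_mxEd.
have Ay_ge0 := regular_pencil_eigen_mulmx_nonneg reg1 r_gt0 r_le1 y_ge0 pencil1.
apply: (spectral_radius_ge_of_mulmx_ge W2_ge0 u_ge0 u_neq0).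
rewrite uE; apply: iter_mx_mulmx_ge; rewrite -pencil1.
have [[split1 [_ [R10 _]]] [split2 [X20 _]]] := (reg1, wreg2).
exact: double_splitting_pencil_comparison split1 split2 X20 R10 X12 R12 r_le1 y_ge0 Ay_ge0.
Qed.
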